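(* Let $G$ be a finite group and $\rho:G\to\mathrm{GL}_d(\mathbb{C})$ a mixable irreducible representation. Then $\rho$ is potentially mixable, i.e. there is $a\in G$ such that $-1$ is an eigenvalue of $\rho(a)$. Furthermore, if $(g_1,p_1),\dots,(g_k,p_k)$ is a mixing sequence of $\rho$ of minimal length, then $p_1=p_k=\tfrac12$ and $g_1$ and $g_k$ have even order in $G$; moreover $g_1$ and $g_k$ can be replaced by elements of order a power of $2$ (keeping a mixing sequence of the same length with $p_1=p_k=\tfrac12$).
   Context: An irreducible representation $\rho:G\to\mathrm{GL}_d(\mathbb{C})$ of a finite group $G$ is mixable if there exist $g_1,\dots,g_k\in G$ and $p_1,\dots,p_k\in[0,1]$ with $\prod_{i=1}^k\big((1-p_i)I+p_i\rho(g_i)\big)=0$ (product taken in the order $i=1,\dots,k$); $(g_1,p_1),\dots,(g_k,p_k)$ is then called a mixing sequence of $\rho$, of length $k$. *)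

From HB Require Import structures.
From mathcomp Require Import all_boot all_order all_algebra all_fingroup all_solvable all_field all_character.
Set Implicit Arguments. Unset Strict Implicit. Unset Printing Implicit Defensive.
Import GroupScope Order.TTheory GRing.Theory Num.Theory.
Local Open Scope ring_scope.

Section Mixing.
Variables (gT : finGroupType) (G : {group gT}) (n : nat).
Variable rG : mx_representation algC G n.

Definition mix_factor (x : gT * algC) : 'M[algC]_n :=
  (1 - x.2)%:M + x.2 *: rG x.1.

Definition mix_prod (s : seq (gT * algC)) : 'M[algC]_n :=
  foldr (fun x M => mix_factor x *m M) 1%:M s.

Definition mixing_seq (s : seq (gT * algC)) : Prop :=
  all (fun x => (x.1 \in G) && (0 <= x.2 <= 1)) s /\ mix_prod s = 0.

Definition mixable : Prop := exists s, mixing_seq s.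

Definition potentially_mixable : Prop :=
  exists2 a, a \in G & eigenvalue (rG a) (-1).

Definition min_mixing_seq (s : seq (gT * algC)) : Prop :=
  mixing_seq s /\ forall s', mixing_seq s' -> (size s <= size s')%N.

End Mixing.

Definition mdflt (gT : finGroupType) : gT * algC := (1%g, 0).

From HB Require Import structures.
From mathcomp Require Import all_boot all_order all_algebra all_fingroup all_solvable all_field all_character.
From Stdlib Require Import Classical.

Set Implicit Arguments.
Unset Strict Implicit.
Unset Printing Implicit Defensive.
Import GroupScope Order.TTheory GRing.Theory Num.Theory.
Local Open Scope ring_scope.

(* A singular factor (1 - p) I + p rho(g) has a kernel vector on which rho(g)
   acts by -(1 - p)/p.  This is a root of unity and a nonpositive real, hence -1:
   so p = 1/2, g has even order and -1 is an eigenvalue of rho(g).  In a mixing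
   sequence of minimal length the first and last factors are singular, since an
   invertible end factor could be cancelled.  Finally the 2-part of g is g^b with
   b odd, and 1 + rho(g^b) = (1 + rho(g)) S with S a polynomial in rho(g), so an
   end element g may be replaced by its 2-part without losing mixing. *)

Lemma ex_min_size (T : Type) (P : seq T -> Prop) : (exists s, P s) ->
  exists2 s, P s & forall s', P s' -> (size s <= size s')%N.
Proof.
case=> s0 Ps0; apply: NNPP => no_min.
suff no_size m s : size s = m -> ~ P s by exact: no_size _ s0 erefl Ps0.
elim/ltn_ind: m s => m IHm s size_s Ps; apply: no_min; exists s => // s' Ps'.
by rewrite leqNgt; apply/negP => lt_s's; apply: (IHm _ _ s' erefl Ps'); rewrite -size_s.
Qed.

Lemma add1rX_odd (R : pzRingType) (a : R) b : odd b ->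
  1 + a ^+ b = (1 + a) * \sum_(i < b) (- a) ^+ i.
Proof.
move=> odd_b; rewrite -[1 + a]opprK opprD [- 1 - a]addrC mulNr -subrX1.
by rewrite exprNn -signr_odd odd_b expr1 mulN1r opprB opprK.
Qed.

Lemma constt2_odd_exp (gT : finGroupType) (x : gT) : ~~ odd #[x] ->
  exists2 b, odd b & (x.`_2 = x ^+ b)%g.
Proof.
move=> even_x; set b := chinese (#[x]`_2)%N (#[x]`_(2^'))%N 1 0.
exists b => //; have two_dvd : (2 %| #[x]`_2)%N.
  by rewrite p_part dvdn_exp // logn_gt0 mem_primes order_gt0 dvdn2 even_x.
have := chinese_modl (coprime_partC 2%N #[x] #[x]) 1 0.
move/(congr1 (modn^~ 2)); rewrite -/b !modn_dvdm // !modn2.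
by case: (odd b).
Qed.

Lemma group_constt (gT : finGroupType) (G : {group gT}) pi x :
  x \in G -> x.`_pi \in G.
Proof. exact: groupX. Qed.

Lemma half_ge0_le1 (R : numFieldType) : 0 <= (1 / 2 : R) <= 1.
Proof. by rewrite divr_ge0 ?ler01 ?ler0n // ler_pdivrMr ?ltr0n // mul1r ler1n. Qed.

Section Mixing.
Variables (gT : finGroupType) (G : {group gT}) (n : nat).
Variable rG : mx_representation algC G n.+1.

Local Notation mix_factor := (mix_factor rG).
Local Notation mix_prod := (mix_prod rG).
Local Notation mixing_seq := (mixing_seq rG).
Local Notation min_mixing_seq := (min_mixing_seq rG).

Lemma mixing_seq_nil : ~ mixing_seq [::].
Proof. by case=> _ /eqP; rewrite /= idmxE oner_eq0. Qed.

Lemma mix_prod_rcons s x : mix_prod (rcons s x) = mix_prod s *m mix_factor x.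
Proof. by elim: s => [|y s IHs] /=; rewrite ?mul1mx ?mulmx1 // IHs mulmxA. Qed.

Lemma mix_factor_half g : mix_factor (g, 1 / 2) = (1 / 2 : algC) *: (1 + rG g).
Proof. by rewrite /mix_factor /= {1}(splitr 1) addrK scalerDr scalemx1. Qed.

Lemma repr_eigen_order_root g (v : 'rV_n.+1) c : g \in G -> v != 0 ->
  v *m rG g = c *: v -> c ^+ #[g] = 1.
Proof.
move=> Gg nz_v vg; have vgX m : v *m rG (g ^+ m)%g = c ^+ m *: v.
  elim: m => [|m IHm]; first by rewrite expg0 repr_mx1 mulmx1 scale1r.
  by rewrite expgS repr_mxM ?groupX // mulmxA vg -scalemxAl IHm scalerA exprS.
apply/eqP; move: (vgX #[g]); rewrite expg_order repr_mx1 mulmx1 => /eqP.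
by rewrite -subr_eq0 -{1}(scale1r v) -scalerBl scaler_eq0 (negPf nz_v) orbF subr_eq0 eq_sym.
Qed.

Lemma mix_factor_kernel g p (v : 'rV_n.+1) : p != 0 -> v *m mix_factor (g, p) = 0 ->
  v *m rG g = - ((1 - p) / p) *: v.
Proof.
move=> nz_p; rewrite mulmxDr mul_mx_scalar -scalemxAr /= => /eqP.
rewrite addrC addr_eq0 => /eqP vg; apply: (scalerI nz_p).
by rewrite vg scalerA mulrN mulrCA mulfV // mulr1 scaleNr.
Qed.

Lemma singular_mix_factor g p : g \in G -> 0 <= p <= 1 ->
  mix_factor (g, p) \notin unitmx ->
  [/\ p = 1 / 2, ~~ odd #[g] & eigenvalue (rG g) (-1)].
Proof.
move=> Gg /andP[p_ge0 p_le1] sing.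
have nz_p : p != 0.
  by apply: contraNneq sing => ->; rewrite /mix_factor subr0 scale0r addr0 unitmx1.
have [v nz_v] : exists2 v : 'rV_n.+1, v != 0 & v *m mix_factor (g, p) = 0.
  by apply/det0P; rewrite unitmxE unitfE negbK in sing.
move/(mix_factor_kernel nz_p) => vg.
have c_ge0 : 0 <= (1 - p) / p by rewrite divr_ge0 // subr_ge0.
have cm := repr_eigen_order_root Gg nz_v vg.
have c1 : (1 - p) / p = 1.
  move: (congr1 Num.norm cm); rewrite normrX normrN normr1 ger0_norm //.
  by move/eqP; rewrite pexpr_eq1 ?order_gt0 // => /eqP.
split; last by apply/eigenvalueP; exists v; rewrite // vg c1.
- have e : 1 - p = p by rewrite -(divfK nz_p (1 - p)) c1 mul1r.
  by rewrite -[X in _ = X / 2](subrK p) e -mulr2n -[p *+ 2]mulr_natr mulfK ?pnatr_eq0.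
- move: cm; rewrite c1 -signr_odd; case: (odd _) => //; rewrite expr1 => /eqP.
  by rewrite eq_sym -addr_eq0 -mulr2n pnatr_eq0.
Qed.

Lemma min_mixing_seq_head_singular x t :
  min_mixing_seq (x :: t) -> mix_factor x \notin unitmx.
Proof.
case=> [[/= /andP[_ adm_t] prod0] minimal]; apply/negP => unit_x.
have : mixing_seq t by split=> //; rewrite -(mulKmx unit_x (mix_prod t)) prod0 mulmx0.
by move/minimal; rewrite ltnn.
Qed.

Lemma min_mixing_seq_last_singular t y :
  min_mixing_seq (rcons t y) -> mix_factor y \notin unitmx.
Proof.
case=> [[adm prod0] minimal]; apply/negP => unit_y.
move: adm; rewrite all_rcons => /andP[_ adm_t].
have : mixing_seq t.
  by split=> //; rewrite -(mulmxK unit_y (mix_prod t)) -mix_prod_rcons prod0 mul0mx.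
by move/minimal; rewrite size_rcons ltnn.
Qed.

Lemma min_mixing_seq_head x t : min_mixing_seq (x :: t) ->
  [/\ x.1 \in G, x.2 = 1 / 2, ~~ odd #[x.1] & eigenvalue (rG x.1) (-1)].
Proof.
move=> min_xt; have [[/= /andP[/andP[Gx px] _] _] _] := min_xt.
by have [] := singular_mix_factor Gx px (min_mixing_seq_head_singular min_xt).
Qed.

Lemma min_mixing_seq_last t y : min_mixing_seq (rcons t y) ->
  [/\ y.1 \in G, y.2 = 1 / 2, ~~ odd #[y.1] & eigenvalue (rG y.1) (-1)].
Proof.
move=> min_ty; have [[adm _] _] := min_ty.
move: adm; rewrite all_rcons => /andP[/andP[Gy py] _].
by have [] := singular_mix_factor Gy py (min_mixing_seq_last_singular min_ty).
Qed.

Lemma mix_factor_half_constt2 g : g \in G -> ~~ odd #[g] ->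
  exists S, mix_factor (g.`_2, 1 / 2) = S *m mix_factor (g, 1 / 2)
         /\ mix_factor (g.`_2, 1 / 2) = mix_factor (g, 1 / 2) *m S.
Proof.
move=> Gg /constt2_odd_exp[b odd_b ->]; set S := \sum_(i < b) (- rG g) ^+ i.
have comm_S : GRing.comm (1 + rG g) S.
  apply: commr_sum => i _; apply/commrX/commrN/commr_sym/commrD.
    exact: commr1.
  exact: commr_refl.
exists S; rewrite !mix_factor_half (repr_mxX rG b Gg) add1rX_odd // !mulmxE.
by rewrite -scalerAl -scalerAr comm_S.
Qed.

Lemma min_mixing_seq_constt2_head x t : min_mixing_seq (x :: t) ->
  min_mixing_seq ((x.1.`_2, 1 / 2) :: t).
Proof.
case: x => g p min_gt; have [/= Gg p_half even_g _] := min_mixing_seq_head min_gt.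
subst p; have [[/= /andP[_ adm_t] prod0] minimal] := min_gt.
have [S [factorS _]] := mix_factor_half_constt2 Gg even_g.
split; last exact: minimal.
by split; rewrite /= ?group_constt ?half_ge0_le1 ?adm_t // factorS -mulmxA prod0 mulmx0.
Qed.

Lemma min_mixing_seq_constt2_last t y : min_mixing_seq (rcons t y) ->
  min_mixing_seq (rcons t (y.1.`_2, 1 / 2)).
Proof.
case: y => g p min_tg; have [/= Gg p_half even_g _] := min_mixing_seq_last min_tg.
subst p; have [[adm prod0] minimal] := min_tg.
move: adm; rewrite all_rcons => /andP[_ adm_t].
have [S [_ factorS]] := mix_factor_half_constt2 Gg even_g.
split; last by move=> s' /minimal; rewrite !size_rcons.
split; first by rewrite all_rcons /= group_constt ?half_ge0_le1 ?adm_t.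
by rewrite mix_prod_rcons factorS mulmxA -mix_prod_rcons prod0 mul0mx.
Qed.

Lemma ex_min_mixing_seq : mixable rG -> exists s, min_mixing_seq s.
Proof. by case/ex_min_size => s ? ?; exists s. Qed.

Lemma mixable_potentially_mixable : mixable rG -> potentially_mixable rG.
Proof.
case/ex_min_mixing_seq => [[[/mixing_seq_nil []]|x t min_s]].
by have [Gx _ _ ev] := min_mixing_seq_head min_s; exists x.1.
Qed.

End Mixing.

Theorem mainTheorem13 (gT : finGroupType) (G : {group gT}) (n : nat)
    (rG : mx_representation algC G n) :
  mx_irreducible rG -> mixable rG ->
  potentially_mixable rG /\
  forall s : seq (gT * algC), min_mixing_seq rG s ->
    let k := size s in
    [/\ (nth (mdflt gT) s 0).2 = 1 / 2, (nth (mdflt gT) s k.-1).2 = 1 / 2,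
        ~~ odd #[(nth (mdflt gT) s 0).1]%g,
        ~~ odd #[(nth (mdflt gT) s k.-1).1]%g &
        exists s' : seq (gT * algC),
          [/\ mixing_seq rG s', size s' = k &
              (forall i, (0 < i < k.-1)%N -> nth (mdflt gT) s' i = nth (mdflt gT) s i)] /\
          [/\ (nth (mdflt gT) s' 0).2 = 1 / 2, (nth (mdflt gT) s' k.-1).2 = 1 / 2,
              2.-elt (nth (mdflt gT) s' 0).1 & 2.-elt (nth (mdflt gT) s' k.-1).1]].
Proof.
case: n rG => [|m] rG irr mix_rG.
  by case: irr => _ /negP[]; apply/eqP/matrixP => -[].
split=> [|s min_s]; first exact: mixable_potentially_mixable.
case: s min_s => [[/mixing_seq_nil []]|x t min_s] /=.
have nth_last_s : nth (mdflt gT) (x :: t) (size t) = last x t := nth_last _ (x :: t).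
have [_ px ox _] := min_mixing_seq_head min_s.
have /min_mixing_seq_last[_ py oy _] : min_mixing_seq rG (rcons (belast x t) (last x t)).
  by rewrite -lastI.
rewrite nth_last_s; split=> //.
(* The head is replaced first; the result is still minimal, so its last factor is
   again singular (this also covers sequences of length 1). *)
pose x' := (x.1.`_2, 1 / 2 : algC).
have /min_mixing_seq_constt2_last min_s' : min_mixing_seq rG (rcons (belast x' t) (last x' t)).
  by rewrite -lastI; apply: min_mixing_seq_constt2_head.
exists (rcons (belast x' t) ((last x' t).1.`_2, 1 / 2)); split; split.
- by case: min_s'.
- by rewrite size_rcons size_belast.
- case=> [//|i] /andP[_ lt_i_t]; rewrite nth_rcons size_belast lt_i_t.
  by rewrite -[RHS]/(nth _ (x' :: t) i.+1) lastI nth_rcons size_belast lt_i_t.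
- by case: (t).
- by rewrite nth_rcons size_belast ltnn eqxx.
- by case: (t) => [|? ?]; apply: p_elt_constt.
- by rewrite nth_rcons size_belast ltnn eqxx p_elt_constt.
Qed.
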